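(* Let $m\ge n$, $0\le r<n$, $A^1,\dots,A^l\in\mathbb{R}^{m\times n}$, $b\in\mathbb{R}^l$, and let $X\in\mathcal{L}\cap\mathcal{M}(r)$ with $\operatorname{rank}(X)=s$ and SVD $X=U\Sigma V^\top$ as in the context. Then: (i) if Assumption 1 holds at $X$, then $\mathrm{N}^M_{\mathcal{M}(r)}(X)\cap\mathrm{N}_{\mathcal{L}}(X)=\{O\}$; (ii) if Assumption 2 holds at $X$, then for every index set $J\subseteq\{1,\dots,n\}$ with $\Gamma\subseteq J$, $\mathrm{N}_{\mathcal{M}_X(J)}(X)\cap\mathrm{N}_{\mathcal{L}}(X)=\{O\}$, where $\mathcal{M}_X(J)=\{UBV_J^\top:B\in\mathbb{R}^{m\times |J|}\}$ and $\mathrm{N}_{\mathcal{M}_X(J)}(X)=\{W: U^\top WV_J=O\}$ is its orthogonal complement.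
   Context: $\langle X,Y\rangle=\sum_{i,j}X_{ij}Y_{ij}$ on $\mathbb{R}^{m\times n}$; $O$ is the zero matrix. $\mathcal{A}(X)=(\langle A^1,X\rangle,\dots,\langle A^l,X\rangle)^\top$, $\mathcal{L}=\{X:\mathcal{A}(X)=b\}$, $\mathcal{M}(r)=\{X:\operatorname{rank}(X)\le r\}$, $\mathrm{N}_{\mathcal{L}}(X)=\{\sum_{i=1}^l y_iA^i: y\in\mathbb{R}^l\}$. SVD convention: $X=U\Sigma V^\top$ with $U$ ($m\times m$) and $V$ ($n\times n$) orthogonal, $\Sigma$ with diagonal $\sigma_1\ge\dots\ge\sigma_s>0$ followed by zeros, $\Gamma=\{1,\dots,s\}$, $\Gamma_m^\perp=\{s+1,\dots,m\}$, $\Gamma_n^\perp=\{s+1,\dots,n\}$; $U_J$, $V_J$ denote column submatrices indexed by $J$. Normal space of the fixed-rank manifold $\mathcal{M}^s=\{X:\operatorname{rank}X=s\}$: $\mathrm{N}_{\mathcal{M}^s}(X)=\{U_{\Gamma_m^\perp}DV_{\Gamma_n^\perp}^\top:D\in\mathbb{R}^{(m-s)\times(n-s)}\}$. Cones: for closed $\Omega$, $X\in\Omega$, $\mathrm{T}^B_\Omega(X)$ is the set of $\Xi$ with $X^k\in\Omega$, $X^k\to X$, $t_k\downarrow0$, $(X^k-X)/t_k\to\Xi$; $\mathrm{N}^F_\Omega(X)$ is its polar $\{Y:\langle Y,\Xi\rangle\le0\ \forall\Xi\in \mathrm{T}^B_\Omega(X)\}$; the Mordukhovich normal cone $\mathrm{N}^M_\Omega(X)$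 is the set of limits of sequences $W^k\in\mathrm{N}^F_\Omega(X^k)$ with $X^k\in\Omega$, $X^k\to X$. Define $T^i_X=\begin{bmatrix}U_\Gamma^\top A^iV_\Gamma & U_\Gamma^\top A^iV_{\Gamma_n^\perp}\\ U_{\Gamma_m^\perp}^\top A^iV_\Gamma & O\end{bmatrix}$ and $R^i_X=U^\top A^iV_\Gamma$, $i=1,\dots,l$. Assumption 1 at $X$: $T^1_X,\dots,T^l_X$ are linearly independent. Assumption 2 at $X$: $R^1_X,\dots,R^l_X$ are linearly independent. *)

From HB Require Import structures.
From mathcomp Require Import all_boot all_order all_algebra.
From mathcomp Require Import all_classical all_reals all_analysis.
Set Implicit Arguments. Unset Strict Implicit. Unset Printing Implicit Defensive.
Import Order.TTheory GRing.Theory Num.Theory.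
Import numFieldNormedType.Exports.
Local Open Scope classical_set_scope.
Local Open Scope ring_scope.

Section Defs.
Variable R : realType.

Definition frob (m n : nat) (X Y : 'M[R]_(m, n)) : R :=
  \sum_(i < m) \sum_(j < n) X i j * Y i j.

Definition Lset (m n l : nat) (A : 'I_l -> 'M[R]_(m, n)) (b : 'I_l -> R)
  : set 'M[R]_(m, n) := [set X | forall i, frob (A i) X = b i].

Definition Mrank (m n r : nat) : set 'M[R]_(m, n) :=
  [set X | (\rank X <= r)%N].

(* N_L(X) = { sum_i y_i A^i : y in R^l } *)
Definition NL (m n l : nat) (A : 'I_l -> 'M[R]_(m, n)) : set 'M[R]_(m, n) :=
  [set W | exists y : 'I_l -> R, W = \sum_(i < l) y i *: A i].

Definition tangentB (m n : nat) (Om : set 'M[R]_(m, n)) (X : 'M[R]_(m, n))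
  : set 'M[R]_(m, n) :=
  [set Xi | exists (Xk : nat -> 'M[R]_(m, n)) (t : nat -> R),
     (forall k, Om (Xk k)) /\ Xk @ \oo --> X /\
     (forall k, 0 < t k) /\ t @ \oo --> (0 : R) /\
     (fun k => (t k)^-1 *: (Xk k - X)) @ \oo --> Xi].

Definition normalF (m n : nat) (Om : set 'M[R]_(m, n)) (X : 'M[R]_(m, n))
  : set 'M[R]_(m, n) :=
  [set Y | forall Xi, tangentB Om X Xi -> frob Y Xi <= 0].

Definition normalM (m n : nat) (Om : set 'M[R]_(m, n)) (X : 'M[R]_(m, n))
  : set 'M[R]_(m, n) :=
  [set W | exists (Xk Wk : nat -> 'M[R]_(m, n)),
     (forall k, Om (Xk k)) /\ (forall k, normalF Om (Xk k) (Wk k)) /\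
     Xk @ \oo --> X /\ Wk @ \oo --> W].

Definition lin_indep (l p q : nat) (F : 'I_l -> 'M[R]_(p, q)) : Prop :=
  forall y : 'I_l -> R, \sum_(i < l) y i *: F i = 0 -> forall i, y i = 0.

Definition orthogonal_mx (k : nat) (U : 'M[R]_k) : Prop := U^T *m U = 1%:M.

(* SVD as in the context: X = U Sigma V^T, U, V orthogonal, Sigma has diagonal
   sigma_1 >= ... >= sigma_s > 0 followed by zeros (0-based indices here). *)
Definition is_svd (m n s : nat) (X : 'M[R]_(m, n)) (U : 'M[R]_m) (V : 'M[R]_n)
  (Sig : 'M[R]_(m, n)) : Prop :=
  orthogonal_mx U /\ orthogonal_mx V /\ X = U *m Sig *m V^T /\
  exists sigma : nat -> R,
    (forall k, (k < s)%N -> 0 < sigma k) /\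
    (forall k1 k2, (k1 <= k2)%N -> (k2 < s)%N -> sigma k2 <= sigma k1) /\
    Sig = \matrix_(i, j) (if ((i : nat) == j) && (i < s)%N then sigma i else 0).

(* T^i_X = [[U_G^T A V_G, U_G^T A V_Gperp],[U_Gperp^T A V_G, O]],
   i.e. U^T A V with its lower-right (m-s)x(n-s) block set to zero *)
Definition Tmx (m n s : nat) (U : 'M[R]_m) (V : 'M[R]_n) (Ai : 'M[R]_(m, n))
  : 'M[R]_(m, n) :=
  \matrix_(i, j) (if (s <= i)%N && (s <= j)%N then 0 else (U^T *m Ai *m V) i j).

Definition VGamma (n s : nat) (hsn : (s <= n)%N) (V : 'M[R]_n) : 'M[R]_(n, s) :=
  colsub (widen_ord hsn) V.

Definition Rmx (m n s : nat) (hsn : (s <= n)%N) (U : 'M[R]_m) (V : 'M[R]_n)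
  (Ai : 'M[R]_(m, n)) : 'M[R]_(m, s) := U^T *m Ai *m VGamma hsn V.

Definition VJ (n : nat) (J : {set 'I_n}) (V : 'M[R]_n) : 'M[R]_(n, #|J|) :=
  colsub (fun k : 'I_#|J| => enum_val k) V.

Definition NMXJ (m n : nat) (J : {set 'I_n}) (U : 'M[R]_m) (V : 'M[R]_n)
  : set 'M[R]_(m, n) := [set W | U^T *m W *m VJ J V = 0].

End Defs.

From HB Require Import structures.
From mathcomp Require Import all_boot all_order all_algebra.
From mathcomp Require Import all_classical all_reals all_analysis.
Set Implicit Arguments. Unset Strict Implicit. Unset Printing Implicit Defensive.
Import Order.TTheory GRing.Theory Num.Theory.
Import numFieldNormedType.Exports.
Local Open Scope classical_set_scope.
Local Open Scope ring_scope.

(* A Frechet normal W to M(r) at Y is orthogonal to every direction along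
   which M(r) contains a whole line through Y; the directions Y B and B Y are
   such, which gives Y^T W = 0 and W Y^T = 0.  Both relations are bilinear
   and pass to limits, so they hold for Mordukhovich normals at X as well.
   Writing X = U Sig V^T with the first s singular values positive, they say
   that U^T W V vanishes outside its lower-right block, i.e. T_X(W) = 0.  As
   T_X is linear, W = sum_i y_i A^i gives sum_i y_i T^i_X = 0, whence y = 0
   by Assumption 1.  Part (ii) is the same argument with R_X: U^T W V_J = 0
   contains U^T W V_Gamma = 0 because Gamma is a subset of J. *)

Section FrobeniusNormals.
Variables (R : realType) (m n : nat).
Implicit Types (Om : set 'M[R]_(m, n)) (W Y Z : 'M[R]_(m, n)).

Lemma frob0l Z : frob 0 Z = 0.
Proof. by rewrite /frob big1 // => i _; rewrite big1 // => j _; rewrite mxE mul0r. Qed.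

Lemma frobrN W Z : frob W (- Z) = - frob W Z.
Proof.
rewrite /frob -sumrN; apply: eq_bigr => i _; rewrite -sumrN.
by apply: eq_bigr => j _; rewrite mxE mulrN.
Qed.

Lemma frob_mulmx_delta W Y (i j : 'I_n) :
  frob W (Y *m delta_mx i j) = (Y^T *m W) i j.
Proof.
have YdE a c : (Y *m delta_mx i j) a c = if c == j then Y a i else 0.
  rewrite mxE (bigD1 i) //= big1 => [|k /negbTE ki]; last by rewrite mxE ki mulr0.
  by rewrite mxE eqxx addr0; case: eqP; rewrite ?mulr1 ?mulr0.
rewrite /frob mxE; apply: eq_bigr => a _.
rewrite (bigD1 j) //= big1 => [|c /negbTE cj]; last by rewrite YdE cj mulr0.
by rewrite YdE eqxx addr0 mxE mulrC.
Qed.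

Lemma frob_delta_mulmx W Y (i j : 'I_m) :
  frob W (delta_mx i j *m Y) = (W *m Y^T) i j.
Proof.
have dYE a c : (delta_mx i j *m Y) a c = if a == i then Y j c else 0.
  rewrite mxE (bigD1 j) //= big1 => [|k /negbTE kj]; last by rewrite mxE kj andbF mul0r.
  by rewrite mxE eqxx andbT addr0; case: eqP; rewrite ?mul1r ?mul0r.
rewrite /frob (bigD1 i) //= [X in _ + X]big1 => [|a /negbTE ai]; last first.
  by apply: big1 => c _; rewrite dYE ai mulr0.
by rewrite addr0 mxE; apply: eq_bigr => c _; rewrite dYE eqxx mxE.
Qed.

Lemma tangentB_line Om Y Z :
  (forall t : R, Om (Y + t *: Z)) -> tangentB Om Y Z.
Proof.
move=> line; exists (fun k => Y + harmonic k *: Z), harmonic.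
have harmonic_neq0 k : harmonic k != 0 :> R by rewrite lt0r_neq0 ?harmonic_gt0.
split=> //; split.
  rewrite -[X in _ --> X]addr0 -(scale0r Z).
  by apply: cvgD; [exact: cvg_cst | apply: cvgZ; [exact: cvg_harmonic | exact: cvg_cst]].
do 2![split; first by [exact: harmonic_gt0 | exact: cvg_harmonic]].
under eq_fun do rewrite addrAC subrr add0r scalerA mulVf // scale1r.
exact: cvg_cst.
Qed.

Lemma normalF_line Om Y Z W :
  (forall t : R, Om (Y + t *: Z)) -> normalF Om Y W -> frob W Z = 0.
Proof.
move=> line nW; apply/eqP; rewrite eq_le (nW _ (tangentB_line line)) /=.
rewrite -oppr_le0 -frobrN; apply/nW/tangentB_line => t.
by rewrite scalerN -scaleNr.
Qed.

Lemma normalM0 Om Y : Om Y -> normalM Om Y 0.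
Proof.
exists (fun=> Y), (fun=> 0); do 2!split=> //.
  by move=> _ Xi _; rewrite frob0l.
by split; exact: cvg_cst.
Qed.

Lemma normalF_Mrank_perp r Y W :
  Mrank r Y -> normalF (Mrank r) Y W -> Y^T *m W = 0 /\ W *m Y^T = 0.
Proof.
rewrite /Mrank /= => rkY nW.
split; apply/matrixP => i j; rewrite [RHS]mxE.
- rewrite -frob_mulmx_delta (normalF_line _ nW) // => t; rewrite /Mrank /=.
  rewrite scalemxAr -{1}(mulmx1 Y) -mulmxDr.
  exact: leq_trans (mxrankM_maxl _ _) rkY.
- rewrite -frob_delta_mulmx (normalF_line _ nW) // => t; rewrite /Mrank /=.
  rewrite scalemxAl -{1}(mul1mx Y) -mulmxDl.
  exact: leq_trans (mxrankM_maxr _ _) rkY.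
Qed.

End FrobeniusNormals.

Section EntrywiseConvergence.
Variable R : realType.

Lemma cvg_mx_entry m n (f : nat -> 'M[R]_(m, n)) (F : 'M[R]_(m, n)) :
  f @ \oo --> F -> forall i j, (fun k => f k i j) @ \oo --> F i j.
Proof.
move=> /cvg_mx_entourageP fF i j.
apply: (proj2 (@cvg_entourageP R ((fun k => f k i j) @ \oo) _ (F i j))) => E entE.
move: (fF E entE); rewrite !near_simpl.
by apply: filterS => k /(_ i j); rewrite inE.
Qed.

Lemma cvg_mulmx_entry m p q (f : nat -> 'M[R]_(m, p)) (g : nat -> 'M[R]_(p, q))
    (F : 'M[R]_(m, p)) (G : 'M[R]_(p, q)) :
  (forall i j, (fun k => f k i j) @ \oo --> F i j) ->
  (forall i j, (fun k => g k i j) @ \oo --> G i j) ->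
  forall i j, (fun k => (f k *m g k) i j) @ \oo --> (F *m G) i j.
Proof.
move=> fF gG i j; rewrite mxE; under eq_fun do rewrite mxE.
by apply: cvg_big => [|c _]; [exact: add_continuous | exact: cvgM].
Qed.

Lemma cvg_mx_eq0 m n (f : nat -> 'M[R]_(m, n)) (F : 'M[R]_(m, n)) :
  (forall i j, (fun k => f k i j) @ \oo --> F i j) -> (forall k, f k = 0) ->
  F = 0.
Proof.
move=> fF f0; apply/matrixP => i j; rewrite [RHS]mxE; move: (fF i j).
have -> : (fun k => f k i j) = fun=> 0 by apply: funext => k; rewrite f0 mxE.
by move=> c0; exact: (cvg_unique _ c0 (cvg_cst 0)).
Qed.

Lemma normalM_Mrank_perp m n r (X W : 'M[R]_(m, n)) :
  normalM (Mrank r) X W -> X^T *m W = 0 /\ W *m X^T = 0.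
Proof.
move=> [Xk [Wk [rkXk [nWk [XkX WkW]]]]].
have perp k := normalF_Mrank_perp (rkXk k) (nWk k).
have cX := cvg_mx_entry XkX; have cW := cvg_mx_entry WkW.
have cXT i j : (fun k => (Xk k)^T i j) @ \oo --> X^T i j.
  by rewrite mxE; under eq_fun do rewrite mxE; exact: cX.
split.
- by apply: cvg_mx_eq0 (fun k => (perp k).1); exact: cvg_mulmx_entry.
- by apply: cvg_mx_eq0 (fun k => (perp k).2); exact: cvg_mulmx_entry.
Qed.

End EntrywiseConvergence.

Section RectangularDiagonal.
Variables (R : idomainType) (m n s : nat) (sigma : nat -> R).
Hypotheses (sigma_neq0 : forall k, (k < s)%N -> sigma k != 0)
  (hsm : (s <= m)%N) (hsn : (s <= n)%N).
Let Sig : 'M[R]_(m, n) :=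
  \matrix_(i, j) (if ((i : nat) == j) && (i < s)%N then sigma i else 0).

Lemma diag_trmx_mulmx_eq0 (M : 'M[R]_(m, n)) :
  Sig^T *m M = 0 -> forall (i : 'I_m) j, (i < s)%N -> M i j = 0.
Proof.
move=> SM0 i j lt_is; pose i' := Ordinal (leq_trans lt_is hsn).
have /eqP := congr1 (fun N : 'M[R]_n => N i' j) SM0.
rewrite !mxE (bigD1 i) //= big1 => [|a ai]; last first.
  have ai' : ((a : nat) == i') = false := negbTE ai.
  by rewrite !mxE ai' mul0r.
by rewrite !mxE eqxx lt_is addr0 mulf_eq0 (negbTE (sigma_neq0 lt_is)) => /eqP.
Qed.

Lemma diag_mulmx_trmx_eq0 (M : 'M[R]_(m, n)) :
  M *m Sig^T = 0 -> forall i (j : 'I_n), (j < s)%N -> M i j = 0.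
Proof.
move=> MS0 i j lt_js; pose j' := Ordinal (leq_trans lt_js hsm).
have /eqP := congr1 (fun N : 'M[R]_m => N i j') MS0.
rewrite !mxE (bigD1 j) //= big1 => [|c cj]; last first.
  have cj' : ((j' : nat) == c) = false by rewrite eq_sym; exact: negbTE cj.
  by rewrite !mxE cj' mulr0.
by rewrite !mxE eqxx lt_js addr0 mulf_eq0 (negbTE (sigma_neq0 lt_js)) orbF => /eqP.
Qed.

End RectangularDiagonal.

Section SVDCoordinates.
Variables (R : realType) (m n s : nat).
Variables (X W : 'M[R]_(m, n)) (U : 'M[R]_m) (V : 'M[R]_n) (Sig : 'M[R]_(m, n)).
Hypothesis svdX : is_svd s X U V Sig.

Lemma svd_trmx_mulmx_eq0 : X^T *m W = 0 -> Sig^T *m (U^T *m W *m V) = 0.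
Proof.
case: svdX => _ [oV [XE _]] XW0.
have : V^T *m (X^T *m W) *m V = 0 by rewrite XW0 mulmx0 mul0mx.
by rewrite XE !trmx_mul trmxK !mulmxA oV mul1mx.
Qed.

Lemma svd_mulmx_trmx_eq0 : W *m X^T = 0 -> (U^T *m W *m V) *m Sig^T = 0.
Proof.
case: svdX => oU [_ [XE _]] WX0.
have : U^T *m (W *m X^T) *m U = 0 by rewrite WX0 mulmx0 mul0mx.
by rewrite XE !trmx_mul trmxK !mulmxA -(mulmxA _ U^T U) oU mulmx1.
Qed.

Lemma Tmx_eq0 : (s <= m)%N -> (s <= n)%N ->
  X^T *m W = 0 -> W *m X^T = 0 -> Tmx s U V W = 0.
Proof.
move=> hsm hsn /svd_trmx_mulmx_eq0 rows0 /svd_mulmx_trmx_eq0 cols0.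
case: svdX => _ [_ [_ [sigma [sigma_gt0 [_ SigE]]]]].
have sigma_neq0 k : (k < s)%N -> sigma k != 0 by move/sigma_gt0/lt0r_neq0.
rewrite SigE in rows0 cols0; apply/matrixP => i j; rewrite /Tmx [in RHS]mxE mxE.
case: leqP => [le_si|lt_is] /=.
  case: leqP => // lt_js.
  exact: (diag_mulmx_trmx_eq0 sigma_neq0 hsm cols0).
exact: (diag_trmx_mulmx_eq0 sigma_neq0 hsn rows0).
Qed.

End SVDCoordinates.

Section CoordinateMaps.
Variables (R : realType) (m n s : nat) (U : 'M[R]_m) (V : 'M[R]_n).

Lemma Tmx_is_linear : linear (Tmx s U V).
Proof.
move=> a W Z; apply/matrixP => i j.
rewrite /Tmx mulmxDr mulmxDl -scalemxAr -scalemxAl !mxE.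
by case: ifP => _; rewrite ?mulr0 ?addr0.
Qed.

HB.instance Definition _ := GRing.isLinear.Build R 'M[R]_(m, n) 'M[R]_(m, n) _
  (Tmx s U V) Tmx_is_linear.

Variable hsn : (s <= n)%N.

Lemma Rmx_is_linear : linear (Rmx hsn U V).
Proof. by move=> a W Z; rewrite /Rmx mulmxDr mulmxDl -scalemxAr -scalemxAl. Qed.

HB.instance Definition _ := GRing.isLinear.Build R 'M[R]_(m, n) 'M[R]_(m, s) _
  (Rmx hsn U V) Rmx_is_linear.

Lemma mulmx_VGamma_eq0 p (M : 'M[R]_(p, n)) (J : {set 'I_n}) :
  (forall j : 'I_n, (j < s)%N -> j \in J) ->
  M *m VJ J V = 0 -> M *m VGamma hsn V = 0.
Proof.
rewrite /VJ /VGamma !mulmx_colsub => GammaJ MJ0; apply/matrixP => a k.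
have kJ : widen_ord hsn k \in J := GammaJ (widen_ord hsn k) (ltn_ord k).
have := congr1 (fun N : 'M[R]_(p, #|J|) => N a (enum_rank_in kJ (widen_ord hsn k))) MJ0.
by rewrite !mxE enum_rankK_in.
Qed.

End CoordinateMaps.

Lemma NL_setI_eq0 (R : realType) (m n p q l : nat) (A : 'I_l -> 'M[R]_(m, n))
    (f : {linear 'M[R]_(m, n) -> 'M[R]_(p, q)}) (S : set 'M[R]_(m, n)) :
  S 0 -> (forall W, S W -> f W = 0) -> lin_indep (fun i => f (A i)) ->
  S `&` NL A = [set 0].
Proof.
move=> S0 Sf indep; apply/seteqP; split=> [W [SW [y WE]] | _ ->]; last first.
  by split=> //; exists (fun=> 0); rewrite big1 // => i _; rewrite scale0r.
have y0 : forall i, y i = 0.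
  apply: indep; rewrite -[RHS](Sf _ SW) WE linear_sum.
  by apply: eq_bigr => i _; rewrite linearZ.
by rewrite WE /= big1 // => i _; rewrite y0 scale0r.
Qed.

Theorem proposition3p1 (R : realType) (m n r l s : nat)
  (A : 'I_l -> 'M[R]_(m, n)) (b : 'I_l -> R)
  (X : 'M[R]_(m, n)) (U : 'M[R]_m) (V : 'M[R]_n) (Sig : 'M[R]_(m, n))
  (hmn : (n <= m)%N) (hrn : (r < n)%N) (hsn : (s <= n)%N)
  (hXL : Lset A b X) (hXM : Mrank r X) (hrank : \rank X = s)
  (hsvd : is_svd s X U V Sig) :
  (lin_indep (fun i => Tmx s U V (A i)) ->
     normalM (Mrank r) X `&` NL A = [set 0]) /\
  (lin_indep (fun i => Rmx hsn U V (A i)) ->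
     forall J : {set 'I_n}, (forall j : 'I_n, (j < s)%N -> j \in J) ->
       NMXJ J U V `&` NL A = [set 0]).
Proof.
split=> [indepT | indepR J GammaJ].
  apply: NL_setI_eq0 indepT; first exact: normalM0.
  move=> W /normalM_Mrank_perp[XW0 WX0].
  exact: Tmx_eq0 hsvd (leq_trans hsn hmn) hsn XW0 WX0.
apply: NL_setI_eq0 indepR => [|W]; first by rewrite /NMXJ /= mulmx0 mul0mx.
exact: mulmx_VGamma_eq0 GammaJ.
Qed.
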